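(* For nonnegative integers $n$ and $s$ with $s\le n$, $$\sum_{k=0}^{n}\begin{bmatrix}n+k\\2k\end{bmatrix}\begin{bmatrix}2k\\k\end{bmatrix}\begin{bmatrix}2k\\k+s\end{bmatrix}\frac{(-1)^k q^{\binom{n-k}{2}}}{(-q;q)_k^2} =\begin{cases}(-1)^s q^{\frac{n^2-s^2}{2}}\begin{bmatrix}n\\ \frac{n-s}{2}\end{bmatrix}_{q^2}^2\dfrac{(q;q)_{n-s}(q;q)_{n+s}}{(q^2;q^2)_n^2}, & \text{if } n\equiv s\pmod 2,\\[2mm] 0, & \text{otherwise.}\end{cases}$$
   Context: For an indeterminate $q$ and an integer $n\ge 0$: $(a;q)_0=1$ and $(a;q)_n=(1-a)(1-aq)\cdots(1-aq^{n-1})$. The $q$-binomial coefficient is $\begin{bmatrix}n\\k\end{bmatrix}_q=\frac{(q^{n-k+1};q)_k}{(q;q)_k}$ if $0\le k\le n$ and $0$ otherwise; if no base is indicated, the base is $q$. *)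

From HB Require Import structures.
From mathcomp Require Import all_boot all_order all_algebra.
From mathcomp Require Import fraction.
Set Implicit Arguments. Unset Strict Implicit. Unset Printing Implicit Defensive.
Import Order.TTheory GRing.Theory Num.Theory.
Local Open Scope ring_scope.

Definition qpoch (F : fieldType) (a q : F) (n : nat) : F :=
  \prod_(i < n) (1 - a * q ^+ i).

Definition qbinom (F : fieldType) (q : F) (n k : nat) : F :=
  if (k <= n)%N then qpoch (q ^+ (n - k).+1) q k / qpoch q q k else 0.

Definition Qq : fieldType := {fraction {poly rat}}.
Definition qX : Qq := tofrac ('X : {poly rat}).

From HB Require Import structures.
From mathcomp Require Import all_boot all_order all_algebra.
From mathcomp Require Import fraction.
From mathcomp Require Import ring zify.
Import GRing.Theory Num.Theory.
Set Implicit Arguments. Unset Strict Implicit. Unset Printing Implicit Defensive.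
Local Open Scope ring_scope.

(* Creative telescoping.  Write t(n,k) for the summand and S(n) for the sum.
   The q-Zeilberger algorithm produces a rational function c(q^k, q^n) such
   that G(n,k) := c t(n+2,k) satisfies
     A(n) t(n+2,k) - B(n) t(n,k) = G(n,k+1) - G(n,k),
   where A, B do not depend on k.  Summing over k, S(n) obeys the two-term
   recurrence A(n) S(n+2) = B(n) S(n).  The right-hand side satisfies the
   same recurrence along n = s + 2a, and both sides agree at n = s and
   n = s + 1 (where the sum has only the terms k = s and k = s + 1, which
   cancel).  Since A(n) <> 0, induction on a finishes the proof.  All of
   this happens in any field in which q is not zero, not a root of unity,
   and no power of q equals -1. *)

Section QPochhammer.
Variables (F : fieldType) (a q : F).

Lemma qpoch0 : qpoch a q 0 = 1.
Proof. by rewrite /qpoch big_ord0. Qed.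

Lemma qpochS m : qpoch a q m.+1 = qpoch a q m * (1 - a * q ^+ m).
Proof. by rewrite /qpoch big_ord_recr. Qed.

Lemma qpochD i j : qpoch a q (i + j) = qpoch a q i * qpoch (a * q ^+ i) q j.
Proof.
rewrite /qpoch big_split_ord /=; congr (_ * _).
by apply: eq_bigr => l _; rewrite exprD mulrA.
Qed.

End QPochhammer.

Lemma qpoch_sqr (F : fieldType) (q : F) m :
  qpoch (q ^+ 2) (q ^+ 2) m = qpoch q q m * qpoch (- q) q m.
Proof.
rewrite /qpoch -big_split /=; apply: eq_bigr => i _.
by rewrite exprAC; ring.
Qed.

Lemma qbinomE (F : fieldType) (b : F) i j : (j <= i)%N ->
  qpoch b b j != 0 -> qpoch b b (i - j) != 0 ->
  qbinom b i j = qpoch b b i / (qpoch b b j * qpoch b b (i - j)).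
Proof.
move=> le_ji nz_j nz_ij; rewrite /qbinom le_ji.
have -> : qpoch b b i = qpoch b b (i - j) * qpoch (b ^+ (i - j).+1) b j.
  by rewrite -{1}(subnK le_ji) qpochD exprS.
by field; rewrite nz_j nz_ij.
Qed.

Definition qgeneric (F : fieldType) (q : F) :=
  [/\ q != 0, forall m, (0 < m)%N -> 1 - q ^+ m != 0 & forall m, 1 + q ^+ m != 0].

Section GenericSum.
Variables (F : fieldType) (q : F).
Hypothesis qgen : qgeneric q.

Lemma qpow_neq0 m : q ^+ m != 0.
Proof. by case: qgen => nz_q _ _; rewrite expf_neq0. Qed.

Lemma subr_qpow_neq0 (e : F) j : e = q ^+ j.+1 -> 1 - e != 0.
Proof. by case: qgen => _ nz_sub _ ->; rewrite nz_sub. Qed.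

Lemma qpow_sub_qpowS_neq0 i j : (i <= j)%N -> q ^+ i - q * q ^+ j != 0.
Proof.
move=> le_ij.
have -> : q ^+ i - q * q ^+ j = q ^+ i * (1 - q ^+ (j - i).+1).
  by rewrite -(subnKC le_ij) exprD addKn exprS; ring.
by rewrite mulf_neq0 ?qpow_neq0 ?(subr_qpow_neq0 (j := (j - i)%N)).
Qed.

Lemma qfact_neq0 m : qpoch q q m != 0.
Proof.
by apply/prodf_neq0 => i _; rewrite (subr_qpow_neq0 (j := i)) // exprS.
Qed.

Lemma qpochNq_neq0 m : qpoch (- q) q m != 0.
Proof.
by case: qgen => _ _ nz_add; apply/prodf_neq0 => i _; rewrite mulNr opprK -exprS.
Qed.

Lemma qfact2_neq0 m : qpoch (q ^+ 2) (q ^+ 2) m != 0.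
Proof. by rewrite qpoch_sqr mulf_neq0 ?qfact_neq0 ?qpochNq_neq0. Qed.

Variable s : nat.

Definition qterm n k :=
  qbinom q (n + k) (2 * k) * qbinom q (2 * k) k * qbinom q (2 * k) (k + s)
  * ((-1) ^+ k * q ^+ 'C(n - k, 2)) / (qpoch (- q) q k) ^+ 2.

Definition qsum n := \sum_(0 <= k < n.+1) qterm n k.

Lemma qterm_gt n k : (n < k)%N -> qterm n k = 0.
Proof.
move=> lt_nk; rewrite /qterm /qbinom.
have -> : (2 * k <= n + k)%N = false by lia.
by rewrite !mul0r.
Qed.

Lemma qterm_lt n k : (k < s)%N -> qterm n k = 0.
Proof.
move=> lt_ks; rewrite /qterm /qbinom.
have -> : (k + s <= 2 * k)%N = false by lia.
by rewrite !mulr0 !mul0r.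
Qed.

Lemma qtermE n k : (s <= k <= n)%N ->
  qterm n k = qpoch q q (n + k) * qpoch q q (2 * k) * ((-1) ^+ k * q ^+ 'C(n - k, 2))
    / (qpoch q q (n - k) * qpoch q q k ^+ 2 * qpoch q q (k + s) * qpoch q q (k - s)
       * qpoch (- q) q k ^+ 2).
Proof.
move=> /andP[le_sk le_kn].
have e1 : (n + k - 2 * k = n - k)%N by lia.
have e2 : (2 * k - k = k)%N by lia.
have e3 : (2 * k - (k + s) = k - s)%N by lia.
rewrite /qterm !qbinomE ?e1 ?e2 ?e3 ?qfact_neq0 //; try lia.
by field; rewrite !qfact_neq0 qpochNq_neq0.
Qed.

(* The ratios t(n,k+1)/t(n,k) and t(n,k)/t(n+2,k) as rational functions of
   x = q^k, N = q^n and S = q^s. *)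
Definition ratio_k (x N S : F) :=
  - (1 - q * N * x) * (1 - q * x * x) * (1 - N / x) * (x * q / N)
  / ((1 - q * q * x * x) * (1 - q * x * S) * (1 - q * x / S)).

Definition ratio_n (x N : F) :=
  (1 - q * N / x) * (1 - q * q * N / x) * x * x / (q * N * N)
  / ((1 - q * N * x) * (1 - q * q * N * x)).

Lemma qtermSk n k : (s <= k <= n)%N ->
  qterm n k.+1 = qterm n k * ratio_k (q ^+ k) (q ^+ n) (q ^+ s).
Proof.
have [nz_q _ _] := qgen.
case/andP=> le_sk; rewrite leq_eqVlt => /orP[/eqP <-|lt_kn].
  by rewrite qterm_gt // /ratio_k divff ?qpow_neq0 // subrr !(mulr0, mul0r).
rewrite !qtermE; try lia.
set d := (n - k.+1)%N.
have e1 : (n - k = d.+1)%N by rewrite /d; lia.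
have e2 : (n + k.+1 = (n + k).+1)%N by lia.
have e3 : (2 * k.+1 = (2 * k).+2)%N by lia.
have e4 : (k.+1 + s = (k + s).+1)%N by lia.
have e5 : (k.+1 - s = (k - s).+1)%N by lia.
have qn : q ^+ n = q ^+ d * (q * q ^+ k).
  by rewrite -exprS -exprD /d; congr (_ ^+ _); lia.
rewrite e1 e2 e3 e4 e5 binS bin1 !qpochS exprD.
rewrite !exprS mul2n -addnn !exprD (exprB le_sk) ?unitfE //.
rewrite /ratio_k qn.
have n1 := qpow_sub_qpowS_neq0 le_sk.
have n2 : 1 - q * q ^+ k * q ^+ s != 0.
  by apply: (subr_qpow_neq0 (j := (k + s)%N)); rewrite !exprS exprD; ring.
have n3 : 1 - q * q * q ^+ k * q ^+ k != 0.
  by apply: (subr_qpow_neq0 (j := (k + k).+1)); rewrite !exprS exprD; ring.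
have n4 : 1 - q * q ^+ d != 0 by rewrite (subr_qpow_neq0 (j := d)) ?exprS.
have n5 : 1 - q * q ^+ k != 0 by rewrite (subr_qpow_neq0 (j := k)) ?exprS.
have n6 : 1 - - q * q ^+ k != 0.
  by case: qgen => _ _ nz_add; rewrite mulNr opprK -exprS.
field.
by rewrite n1 n2 n3 n4 n5 n6 nz_q !qpow_neq0 !qfact_neq0 qpochNq_neq0.
Qed.

Lemma qterm_nSS n k : (s <= k <= n.+2)%N ->
  qterm n k = qterm n.+2 k * ratio_n (q ^+ k) (q ^+ n).
Proof.
case/andP=> le_sk le_kn; have [nz_q _ _] := qgen.
have [le_kn'|lt_nk] := leqP k n; last first.
  rewrite qterm_gt // /ratio_n.
  have [->|->] : k = n.+1 \/ k = n.+2 by lia.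
    rewrite (exprS q n) divff ?subrr ?mulf_neq0 ?qpow_neq0 //.
    by rewrite !(mulr0, mul0r).
  rewrite (exprS q n.+1) (exprS q n) (mulrA q q).
  by rewrite divff ?subrr ?mulf_neq0 ?qpow_neq0 // !(mulr0, mul0r).
rewrite !qtermE ?le_sk ?le_kn ?le_kn' //.
set d := (n - k)%N.
have e1 : (n.+2 - k = d.+2)%N by rewrite /d; lia.
have e2 : (n.+2 + k = (n + k).+2)%N by lia.
have qn : q ^+ n = q ^+ d * q ^+ k by rewrite -exprD /d subnK.
rewrite e1 e2 !binS bin1 bin0 !qpochS /ratio_n !exprS !expr0 !exprD qn.
have n1 : 1 - q * q * (q ^+ d * q ^+ k) * q ^+ k != 0.
  by apply: (subr_qpow_neq0 (j := (d + k + k).+1)); rewrite !exprS !exprD; ring.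
have n2 : 1 - q * (q ^+ d * q ^+ k) * q ^+ k != 0.
  by apply: (subr_qpow_neq0 (j := (d + k + k)%N)); rewrite !exprS !exprD; ring.
have n3 : 1 - q * (q * q ^+ d) != 0 by rewrite (subr_qpow_neq0 (j := d.+1)) ?exprS.
have n4 : 1 - q * q ^+ d != 0 by rewrite (subr_qpow_neq0 (j := d)) ?exprS.
field.
by rewrite n1 n2 n3 n4 nz_q !qpow_neq0 !qfact_neq0 qpochNq_neq0.
Qed.

(* The q-Zeilberger certificate G(n,k)/t(n+2,k).  Its factor 1 - q^(k-s) is
   passed as z = q^(k-s), which avoids negative powers of q; under truncated
   subtraction it makes G(n,k) vanish for all k <= s. *)
Definition cert_ratio (x N S z : F) :=
  - q * q * N * (1 - q * q * q * N * N) / x * (1 - x * x) * (1 - x * S) * (1 - z)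
  / ((1 - q * N * x) * (1 - q * q * N * x)).

Definition cert n k :=
  cert_ratio (q ^+ k) (q ^+ n) (q ^+ s) (q ^+ (k - s)) * qterm n.+2 k.

Definition rec_coefA (N S : F) := (1 - q * q * N / S) * (1 - q * q * N * S).
Definition rec_coefB (N S : F) := q * q * N * N * (1 - q * N / S) * (1 - q * N * S).

Lemma cert_le n k : (k <= s)%N -> cert n k = 0.
Proof.
move=> le_ks; rewrite /cert /cert_ratio.
have -> : (k - s = 0)%N by apply/eqP; rewrite subn_eq0.
by rewrite expr0 subrr !(mulr0, mul0r).
Qed.

Lemma qterm_telescoping n k : (k <= n.+2)%N ->
  rec_coefA (q ^+ n) (q ^+ s) * qterm n.+2 k - rec_coefB (q ^+ n) (q ^+ s) * qterm n k
  = cert n k.+1 - cert n k.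
Proof.
move=> le_kn; have [nz_q _ _] := qgen.
have [lt_ks|le_sk] := ltnP k s.
  by rewrite !qterm_lt // !cert_le ?(ltnW lt_ks) // !mulr0 subrr.
have le_skn : (s <= k <= n.+2)%N by rewrite le_sk.
rewrite (qterm_nSS le_skn) /cert (qtermSk le_skn) (subSn le_sk).
rewrite !exprS (exprB le_sk) ?unitfE //.
rewrite /rec_coefA /rec_coefB /cert_ratio /ratio_n /ratio_k.
have m1 : 1 - q * q * q ^+ n * q ^+ k != 0.
  by apply: (subr_qpow_neq0 (j := (n + k).+1)); rewrite !exprS !exprD; ring.
have m2 : 1 - q * q ^+ n * q ^+ k != 0.
  by apply: (subr_qpow_neq0 (j := (n + k)%N)); rewrite !exprS !exprD; ring.
have m3 := qpow_sub_qpowS_neq0 le_sk.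
have m4 : 1 - q * q ^+ k * q ^+ s != 0.
  by apply: (subr_qpow_neq0 (j := (k + s)%N)); rewrite !exprS !exprD; ring.
have m5 : 1 - q * q * q ^+ k * q ^+ k != 0.
  by apply: (subr_qpow_neq0 (j := (k + k).+1)); rewrite !exprS !exprD; ring.
have m6 : 1 - q * q * q ^+ n * (q * q ^+ k) != 0.
  by apply: (subr_qpow_neq0 (j := (n + k).+2)); rewrite !exprS !exprD; ring.
field.
by rewrite m1 m2 m3 m4 m5 m6 nz_q !qpow_neq0.
Qed.

Lemma qsum_rec n :
  rec_coefA (q ^+ n) (q ^+ s) * qsum n.+2 = rec_coefB (q ^+ n) (q ^+ s) * qsum n.
Proof.
have -> : qsum n = \sum_(0 <= k < n.+3) qterm n k.
  rewrite /qsum (big_nat_recr n.+2) // (big_nat_recr n.+1) //=.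
  by rewrite (qterm_gt (ltnSn n)) (@qterm_gt n n.+2) // !addr0.
apply/eqP; rewrite -subr_eq0; apply/eqP.
rewrite /qsum !mulr_sumr -sumrB.
rewrite (telescope_sumr_eq (cert n)) //; last first.
  by move=> k /andP[_ lt_kn]; apply: qterm_telescoping.
by rewrite (cert_le n (leq0n s)) /cert qterm_gt // mulr0 subrr.
Qed.

Lemma rec_coefA_neq0 n : (s <= n)%N -> rec_coefA (q ^+ n) (q ^+ s) != 0.
Proof.
move=> le_sn; have qn : q ^+ n = q ^+ s * q ^+ (n - s) by rewrite -exprD subnKC.
rewrite /rec_coefA qn mulf_neq0 //.
  apply: (subr_qpow_neq0 (j := (n - s).+1)).
  by rewrite !exprS; field; rewrite qpow_neq0.
by apply: (subr_qpow_neq0 (j := (n - s + s + s).+1)); rewrite !exprS !exprD; ring.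
Qed.

(* At k = s, n = s + 1 the ratio is -1: the two terms of S(s+1) cancel. *)
Lemma ratio_k_base : ratio_k (q ^+ s) (q ^+ s.+1) (q ^+ s) = -1.
Proof.
have [nz_q _ _] := qgen.
have r1 : 1 - q * q * q ^+ s * q ^+ s != 0.
  by apply: (subr_qpow_neq0 (j := (s + s).+1)); rewrite !exprS !exprD; ring.
have r2 : 1 - q * q ^+ s * q ^+ s != 0.
  by apply: (subr_qpow_neq0 (j := (s + s)%N)); rewrite !exprS !exprD; ring.
have r3 : 1 - q != 0 by rewrite (subr_qpow_neq0 (j := 0%N)) ?expr1.
by rewrite /ratio_k exprS; field; rewrite r1 r2 r3 nz_q qpow_neq0.
Qed.

(* The right-hand side at n = s + 2a, in q-factorial form. *)
Definition even_value a :=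
  (-1) ^+ s * q ^+ (2 * a * (a + s)) * qpoch q q (2 * a) * qpoch q q (2 * a + 2 * s)
  / (qpoch (q ^+ 2) (q ^+ 2) a ^+ 2 * qpoch (q ^+ 2) (q ^+ 2) (a + s) ^+ 2).

Lemma even_value_rec a :
  rec_coefA (q ^+ (s + 2 * a)) (q ^+ s) * even_value a.+1
  = rec_coefB (q ^+ (s + 2 * a)) (q ^+ s) * even_value a.
Proof.
have E1 : (2 * a.+1 = (a + a).+2)%N by lia.
have E2 : (2 * a.+1 + 2 * s = (a + a + (s + s)).+2)%N by lia.
have E3 : (2 * a + 2 * s = a + a + (s + s))%N by lia.
have E4 : (2 * a.+1 * (a.+1 + s) = 2 * a * (a + s) + (a + a + (a + a) + (s + s)).+2)%N.
  by nia.
have E5 : (a.+1 + s = (a + s).+1)%N by lia.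
rewrite /even_value E4 E2 E1 E3 E5 mul2n -addnn.
rewrite !qpochS !exprD -!exprM.
rewrite !mul2n -!addnn !exprS !expr0 !exprD /rec_coefA /rec_coefB.
have p1 : qpoch (q * (q * 1)) (q * (q * 1)) (a + s) != 0.
  by rewrite mulr1 -expr2 qfact2_neq0.
have p2 : qpoch (q * (q * 1)) (q * (q * 1)) a != 0.
  by rewrite mulr1 -expr2 qfact2_neq0.
have r1 : 1 - q * q * (q ^+ a * q ^+ a * (q ^+ s * q ^+ s)) != 0.
  by apply: (subr_qpow_neq0 (j := (a + a + (s + s)).+1)); rewrite !exprS !exprD; ring.
have r2 : 1 - q * q * (q ^+ a * q ^+ a) != 0.
  by apply: (subr_qpow_neq0 (j := (a + a).+1)); rewrite !exprS !exprD; ring.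
by field; rewrite p1 p2 r1 r2 qpow_neq0.
Qed.

Lemma qsum_s : qsum s = even_value 0.
Proof.
rewrite /qsum big_nat_recr //= big_nat_cond big1 ?add0r; last first.
  by move=> k /andP[/andP[_ lt_ks] _]; apply: qterm_lt.
rewrite qtermE ?leqnn // /even_value !muln0 !mul0n !add0n subnn bin0n expr0 !qpoch0.
rewrite mul2n -addnn !qpoch_sqr.
by field; rewrite !qfact_neq0 qpochNq_neq0.
Qed.

Lemma qsum_sS : qsum s.+1 = 0.
Proof.
rewrite /qsum !big_nat_recr //= big_nat_cond big1 ?add0r; last first.
  by move=> k /andP[/andP[_ lt_ks] _]; apply: qterm_lt.
by rewrite qtermSk ?leqnn ?leqnSn // ratio_k_base mulrN1 subrr.
Qed.

Lemma qsum_parity a : qsum (s + 2 * a) = even_value a /\ qsum (s + 2 * a).+1 = 0.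
Proof.
elim: a => [|a [IHeven IHodd]]; first by rewrite muln0 addn0 qsum_s qsum_sS.
have -> : (s + 2 * a.+1 = (s + 2 * a).+2)%N by lia.
split.
  apply: (mulfI (rec_coefA_neq0 (leq_addr (2 * a) s))).
  by rewrite qsum_rec IHeven even_value_rec.
have le_sn : (s <= (s + 2 * a).+1)%N by lia.
by apply: (mulfI (rec_coefA_neq0 le_sn)); rewrite qsum_rec IHodd !mulr0.
Qed.

Lemma even_valueE a :
  (-1) ^+ s * q ^+ (((s + 2 * a) ^ 2 - s ^ 2) %/ 2)
    * (qbinom (q ^+ 2) (s + 2 * a) ((s + 2 * a - s) %/ 2)) ^+ 2
    * qpoch q q (s + 2 * a - s) * qpoch q q (s + 2 * a + s)
    / (qpoch (q ^+ 2) (q ^+ 2) (s + 2 * a)) ^+ 2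
  = even_value a.
Proof.
have e1 : (((s + 2 * a) ^ 2 - s ^ 2) %/ 2 = 2 * a * (a + s))%N.
  have -> : ((s + 2 * a) ^ 2 - s ^ 2 = 2 * (2 * a * (a + s)))%N.
    by rewrite !expnS !expn0; nia.
  by rewrite mulKn.
have e2 : ((s + 2 * a - s) %/ 2 = a)%N by rewrite addKn mulKn.
have e3 : (s + 2 * a - s = 2 * a)%N by lia.
have e4 : (s + 2 * a + s = 2 * a + 2 * s)%N by lia.
have e5 : (s + 2 * a - a = a + s)%N by lia.
rewrite e1 e2 e3 e4 qbinomE ?qfact2_neq0 ?e5 //; last by lia.
by rewrite /even_value; field; rewrite !qfact2_neq0.
Qed.

Lemma qsum_closed_form n : (s <= n)%N ->
  qsum n = if n == s %[mod 2] then
      (-1) ^+ s * q ^+ ((n ^ 2 - s ^ 2) %/ 2)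
      * (qbinom (q ^+ 2) n ((n - s) %/ 2)) ^+ 2
      * qpoch q q (n - s) * qpoch q q (n + s)
      / (qpoch (q ^+ 2) (q ^+ 2) n) ^+ 2
    else 0.
Proof.
move=> le_sn.
have [a [->|->]] : exists a, n = (s + 2 * a)%N \/ n = (s + 2 * a).+1.
- by exists ((n - s) %/ 2)%N; lia.
- have -> : (s + 2 * a == s %[mod 2]) = true by apply/eqP; lia.
  by rewrite (qsum_parity a).1 even_valueE.
- have -> : ((s + 2 * a).+1 == s %[mod 2]) = false by apply/negbTE/eqP; lia.
  exact: (qsum_parity a).2.
Qed.

End GenericSum.

Lemma tofrac_neq0 (p : {poly rat}) : p != 0 -> tofrac p != 0.
Proof. by rewrite -tofrac0 tofrac_eq. Qed.

Lemma qX_generic : qgeneric qX.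
Proof.
have qXE m : qX ^+ m = tofrac 'X^m by rewrite /qX rmorphXn.
split=> [|m m_gt0|m].
- by rewrite tofrac_neq0 ?polyX_eq0.
- rewrite qXE -tofrac1 -tofracB tofrac_neq0 // subr_eq0.
  apply/eqP => /(congr1 (fun p : {poly rat} => size p)); rewrite size_polyXn size_poly1.
  by case: m m_gt0.
- rewrite qXE -tofrac1 -tofracD tofrac_neq0 //.
  apply/eqP => /(congr1 (horner^~ 1)).
  rewrite hornerD hornerC hornerXn expr1n horner0 => /eqP.
  by rewrite -(natrD _ 1 1) pnatr_eq0.
Qed.

Theorem lemma3p2 (n s : nat) (hs : (s <= n)%N) :
  \sum_(0 <= k < n.+1)
     qbinom qX (n + k) (2 * k) * qbinom qX (2 * k) k * qbinom qX (2 * k) (k + s)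
     * ((-1) ^+ k * qX ^+ 'C(n - k, 2)) / (qpoch (- qX) qX k) ^+ 2
  = if n == s %[mod 2] then
      (-1) ^+ s * qX ^+ ((n ^ 2 - s ^ 2) %/ 2)
      * (qbinom (qX ^+ 2) n ((n - s) %/ 2)) ^+ 2
      * qpoch qX qX (n - s) * qpoch qX qX (n + s)
      / (qpoch (qX ^+ 2) (qX ^+ 2) n) ^+ 2
    else 0.
Proof. exact: (qsum_closed_form qX_generic hs). Qed.
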